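(* Let $G$ be a connected finite simple undirected graph with vertex set $V_G$, $|V_G|\ge 3$, and maximum degree $d_G$. Let $W:V_G\to\mathbb{R}$ have a unique minimizer and suppose that the second-smallest value of $W$ (counted with multiplicity over vertices) exceeds the minimum value by exactly $1$. For $s\in[0,1]$ let $H(s)=(1-s)L_G+s\sum_{x}W(x)|x\rangle\langle x|$ and let $\gamma(s)$ be the gap between the smallest and second-smallest eigenvalues of $H(s)$. Suppose that for every $s\in[0,1)$ the ground state of $H(s)$ is single-peaked. Then for all $s\in[0,1]$, $$\gamma(s)\ge\min\left\{\frac{7}{16},\ \frac{1}{16\,d_G^2\,(8|W|+1)\,|V_G|^2}\right\},$$ where $|W|=\max_x W(x)-\min_x W(x)$; in particular $\gamma(s)=\Omega\!\left(\frac{1}{d_G^2|W||V_G|^2}\right)$ uniformly in $s\in[0,1]$.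
   Context: For a finite simple undirected graph $G$ with vertex set $V_G$, let $\mathcal{H}_G$ be the complex Hilbert space with orthonormal basis $\{|x\rangle : x\in V_G\}$. The graph Laplacian is $L_G=\sum_{x} d_x |x\rangle\langle x| - \sum_{x\sim y}|x\rangle\langle y|$, where $d_x$ is the degree of $x$ and the second sum runs over ordered pairs of adjacent vertices. For $s\in[0,1)$ and connected $G$, the ground state of $H(s)$ is nondegenerate and can be written $\sum_x\psi(x)|x\rangle$ with $\psi(x)>0$ for all $x$ (Perron–Frobenius). Such a $\psi$ has a local maximum at $x$ if $\psi(x)\ge\psi(y)$ for every neighbor $y$ of $x$, and $\psi$ is single-peaked if the set of its local maxima forms a connected set of vertices in $G$. *)

From HB Require Import structures.
From mathcomp Require Import all_boot all_order all_algebra.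
From mathcomp Require Import reals.
Set Implicit Arguments. Unset Strict Implicit. Unset Printing Implicit Defensive.
Import Order.TTheory GRing.Theory Num.Theory.
Local Open Scope ring_scope.

Section Defs.
Variable R : realType.
Variable n : nat.

Definition simple_graph (e : rel 'I_n) : Prop := symmetric e /\ irreflexive e.

Definition graph_connected (e : rel 'I_n) : Prop := forall x y, connect e x y.

Definition deg (e : rel 'I_n) (x : 'I_n) : nat := #|[set y | e x y]|.

Definition max_deg (e : rel 'I_n) : nat := (\max_(x : 'I_n) deg e x)%N.

Definition laplacian (e : rel 'I_n) : 'M[R]_n :=
  \matrix_(i, j) (if i == j then (deg e i)%:R else if e i j then -1 else 0).

Definition Hs (e : rel 'I_n) (W : 'I_n -> R) (s : R) : 'M[R]_n :=
  (1 - s) *: laplacian e + s *: diag_mx (\row_x W x).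

(* |W| = max_x W(x) - min_x W(x), written as max_{x,y} (W x - W y) *)
Definition Wspread (W : 'I_n -> R) : R :=
  \big[Num.max/0]_(x : 'I_n) \big[Num.max/0]_(y : 'I_n) (W x - W y).

Definition min_eigenvalue (A : 'M[R]_n) (a : R) : Prop :=
  eigenvalue A a /\ forall b, eigenvalue A b -> a <= b.

Definition local_max (e : rel 'I_n) (psi : 'I_n -> R) (x : 'I_n) : bool :=
  [forall y, e x y ==> (psi y <= psi x)].

Definition single_peaked (e : rel 'I_n) (psi : 'I_n -> R) : Prop :=
  forall x y, local_max e psi x -> local_max e psi y ->
    connect [rel a b | [&& e a b, local_max e psi a & local_max e psi b]] x y.

Definition sorted_spectrum (A : 'M[R]_n) (l : seq R) : Prop :=
  sorted <=%R l /\ char_poly A = \prod_(x <- l) ('X - x%:P).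

End Defs.

(* For s near 1 the potential dominates: testing H(s) against the indicator
   of the minimiser x0 of W gives l_0 <= (1 - s) d + s W(x0), and on the
   hyperplane orthogonal to that indicator the potential is at least
   W(x0) + 1, so l_1 >= s (W(x0) + 1) by Courant-Fischer; hence the gap is at
   least s - (1 - s) d.
   For the other values of s the ground state psi is positive (its modulus is
   again a ground state, and its zero set is closed under adjacency).  Writing
   g = psi h for g orthogonal to psi turns <g, (H - l_0) g> into the weighted
   Dirichlet form (1 - s)/2 sum_{x~y} psi(x) psi(y) (h(x) - h(y))^2.
   Single-peakedness joins every vertex x to the maximiser of psi by a simple
   path on which psi >= psi(x), and Cauchy-Schwarz along these paths gives a
   Poincare inequality with constant n^2, so l_1 - l_0 >= (1 - s) / (2 n^2).
   The eigenvalue bounds come from the complex spectral theorem. *)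

From HB Require Import structures.
From mathcomp Require Import all_boot all_order all_algebra.
From mathcomp Require Import reals.
From mathcomp.real_closed Require Import complex.
From mathcomp Require Import ring lra.
Set Implicit Arguments. Unset Strict Implicit. Unset Printing Implicit Defensive.
Import Order.TTheory GRing.Theory Num.Theory.
Local Open Scope ring_scope.

Definition qform (R : pzRingType) n (A : 'M[R]_n) (f : 'I_n -> R) : R :=
  \sum_i \sum_j f i * A i j * f j.

Section QuadraticFormAlgebra.
Variables (R : comPzRingType) (n : nat).
Implicit Types (A : 'M[R]_n) (f g u : 'I_n -> R) (i j : 'I_n).

Lemma sum_delta i (F : 'I_n -> R) : \sum_j (i == j)%:R * F j = F i.
Proof.
rewrite (bigD1 i) //= big1 ?eqxx ?mul1r ?addr0 // => j ji.
by rewrite eq_sym (negbTE ji) mul0r.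
Qed.

Lemma sum_delta_sqr i : \sum_j ((i == j)%:R : R) ^+ 2 = 1.
Proof.
rewrite -[RHS](sum_delta i (fun _ => 1)); apply: eq_bigr => j _.
by case: (i == j); rewrite ?expr1n ?expr0n ?mulr1.
Qed.

Lemma sum2D (F G : 'I_n -> 'I_n -> R) :
  \sum_i \sum_j (F i j + G i j) = \sum_i \sum_j F i j + \sum_i \sum_j G i j.
Proof. by rewrite -big_split; apply: eq_bigr => i _; rewrite big_split. Qed.

Lemma sum2B (F G : 'I_n -> 'I_n -> R) :
  \sum_i \sum_j (F i j - G i j) = \sum_i \sum_j F i j - \sum_i \sum_j G i j.
Proof. by rewrite -sumrB; apply: eq_bigr => i _; rewrite sumrB. Qed.

Lemma mulr_sum2r a (F : 'I_n -> 'I_n -> R) :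
  \sum_i \sum_j (a * F i j) = a * \sum_i \sum_j F i j.
Proof. by rewrite mulr_sumr; apply: eq_bigr => i _; rewrite mulr_sumr. Qed.

Lemma sum2_delta_l j (F : 'I_n -> 'I_n -> R) :
  \sum_i \sum_k (j == i)%:R * F i k = \sum_k F j k.
Proof.
rewrite -[RHS](sum_delta j (fun i => \sum_k F i k)).
by apply: eq_bigr => i _; rewrite mulr_sumr.
Qed.

Lemma sum2_delta_r j (F : 'I_n -> 'I_n -> R) :
  \sum_i \sum_k (j == k)%:R * F i k = \sum_i F i j.
Proof. by apply: eq_bigr => i _; rewrite sum_delta. Qed.

Lemma eq_qform A f g : f =1 g -> qform A f = qform A g.
Proof. by move=> fg; apply: eq_bigr => i _; apply: eq_bigr => j _; rewrite !fg. Qed.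

Lemma qform0 A : qform A (fun _ => 0) = 0.
Proof. by rewrite /qform big1 // => i _; rewrite big1 // => j _; rewrite !mul0r. Qed.

Lemma qform_delta A j : qform A (fun k => (j == k)%:R) = A j j.
Proof.
rewrite /qform (eq_bigr (fun i => \sum_k (j == i)%:R * ((j == k)%:R * A i k))).
  by rewrite sum2_delta_l sum_delta.
by move=> i _; apply: eq_bigr => k _; ring.
Qed.

Lemma qform_add_delta A u t j : A^T = A ->
  qform A (fun k => u k + t * (j == k)%:R) =
  qform A u + 2 * t * \sum_i u i * A i j + t ^+ 2 * A j j.
Proof.
move=> AT; have Asym i k : A k i = A i k by rewrite -[in LHS]AT mxE.
rewrite /qform.
transitivity (\sum_i \sum_k (u i * A i k * u k
    + t * ((j == i)%:R * (A i k * u k) + (j == k)%:R * (u i * A i k))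
    + t ^+ 2 * ((j == i)%:R * ((j == k)%:R * A i k)))).
  by apply: eq_bigr => i _; apply: eq_bigr => k _; ring.
rewrite !sum2D !mulr_sum2r sum2D (sum2_delta_l j (fun i k => A i k * u k)).
rewrite (sum2_delta_l j (fun i k => (j == k)%:R * A i k)) sum_delta.
rewrite (sum2_delta_r j (fun i k => u i * A i k)).
under [X in _ + _ * (X + _) + _]eq_bigr => k _ do rewrite -Asym mulrC.
by rewrite mulr2n; ring.
Qed.

Lemma qform_eigenvector A (a : R) (v : 'rV[R]_n) : v *m A = a *: v ->
  qform A (fun x => v 0 x) = a * \sum_i v 0 i ^+ 2.
Proof.
move=> vA; rewrite /qform exchange_big /= mulr_sumr; apply: eq_bigr => j _.
rewrite -mulr_suml; have := congr1 (fun M : 'rV_n => M 0 j) vA; rewrite !mxE => ->.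
by rewrite -mulrA -expr2.
Qed.

Lemma row_eigen_eqn A (v : 'rV[R]_n) (a : R) : v *m A = a *: v ->
  forall y, \sum_x v 0 x * A x y = a * v 0 y.
Proof. by move=> vA y; have := congr1 (fun M : 'rV_n => M 0 y) vA; rewrite !mxE. Qed.

End QuadraticFormAlgebra.

Section RayleighQuotient.
Variables (R : realFieldType) (n : nat).
Implicit Types (A : 'M[R]_n) (f u : 'I_n -> R) (i j : 'I_n).

Lemma quadratic_ge0_lin0 (a b : R) : (forall t, 0 <= 2 * t * b + t ^+ 2 * a) -> b = 0.
Proof.
move=> h; have a0 : 0 <= a by have := h 1; have := h (-1); lra.
have a1 : 0 < a + 1 by lra.
have := h (- b / (a + 1)).
have -> : 2 * (- b / (a + 1)) * b + (- b / (a + 1)) ^+ 2 * a =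
    - (b ^+ 2 * (a + 2)) / (a + 1) ^+ 2 by field; rewrite gt_eqF.
rewrite pmulr_lge0 ?invr_gt0 ?exprn_gt0 // oppr_ge0 => hb.
apply/eqP; rewrite -sqrf_eq0 eq_le sqr_ge0 andbT.
by have := mulr_ge0 (sqr_ge0 b) a0; lra.
Qed.

Lemma qform_min_eigenvector A (lam : R) u : A^T = A ->
  (forall f, lam * \sum_i f i ^+ 2 <= qform A f) ->
  qform A u = lam * \sum_i u i ^+ 2 ->
  forall j, \sum_i u i * A i j = lam * u j.
Proof.
move=> AT hmin hu j; apply/eqP; rewrite -subr_eq0; apply/eqP.
apply: (@quadratic_ge0_lin0 (A j j - lam)) => t.
have := hmin (fun k => u k + t * (j == k)%:R); rewrite qform_add_delta // hu.
have -> : \sum_i (u i + t * (j == i)%:R) ^+ 2 = \sum_i u i ^+ 2 + 2 * t * u j + t ^+ 2.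
  transitivity (\sum_i u i ^+ 2 + 2 * t * \sum_i (j == i)%:R * u i
                 + t ^+ 2 * \sum_i ((j == i)%:R : R) ^+ 2).
    by rewrite !mulr_sumr -!big_split; apply: eq_bigr => i _ /=; ring.
  by rewrite sum_delta sum_delta_sqr mulr1.
lra.
Qed.

Lemma qform_norm_le A f : (forall i j, i != j -> A i j <= 0) ->
  qform A (fun x => `|f x|) <= qform A f.
Proof.
move=> offdiag; apply: ler_sum => i _; apply: ler_sum => j _.
have [->|ij] := eqVneq i j.
  by rewrite mulrAC [in X in _ <= X]mulrAC -!expr2 real_normK ?num_real.
rewrite mulrAC [in X in _ <= X]mulrAC -normrM.
by apply: ler_wnM2r; [exact: offdiag | exact: real_ler_norm (num_real _)].
Qed.

End RayleighQuotient.

Section RealSymmetricSpectrum.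
Local Open Scope sesquilinear_scope.
Variable R : rcfType.
Local Notation C := R[i].
Local Notation toC := (real_complex R).
Local Notation Re := complex.Re.
Local Notation Im := complex.Im.

Lemma char_poly_conj n (P M : 'M[C]_n) : P \in unitmx ->
  char_poly (invmx P *m M *m P) = char_poly M.
Proof.
move=> Pu; pose Pp := map_mx (@polyC C) P.
have Ppu : Pp \in unitmx by rewrite map_unitmx.
rewrite /char_poly.
have -> : char_poly_mx (invmx P *m M *m P) = invmx Pp *m char_poly_mx M *m Pp.
  rewrite /char_poly_mx !map_mxM map_invmx -/Pp mulmxBr mulmxBl.
  by rewrite scalar_mxC -[_ *m invmx Pp *m Pp]mulmxA mulVmx // mulmx1.
by rewrite !det_mulmx det_inv mulrC mulrA mulrV ?mul1r.
Qed.

Lemma real_symmetric_spectral n (A : 'M[R]_n) (l : seq R) : A^T = A ->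
  char_poly A = \prod_(x <- l) ('X - x%:P) ->
  exists (P : 'M[C]_n) (D : 'rV[C]_n),
    [/\ P *m P^t* = 1%:M, P^t* *m P = 1%:M,
        map_mx toC A = P^t* *m diag_mx D *m P &
        perm_eq [seq D 0 k | k <- enum 'I_n] (map toC l)].
Proof.
move=> AT cA; set AC := map_mx toC A.
have ACn : AC \is normalmx.
  apply: symmetric_normalmx.
    by apply/is_hermitianmxP; rewrite expr0 scale1r map_mx_id // /AC map_trmx AT.
  by apply/mxOverP => i j; rewrite mxE; apply/complex_realP; eexists.
have Pu := spectral_unitarymx AC; have Pinv := invmx_unitary Pu.
have PtP : (spectralmx AC)^t* *m spectralmx AC = 1%:M.
  by rewrite -Pinv mulVmx ?spectral_unit.
have eAC := orthomx_spectralP ACn; rewrite Pinv in eAC.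
exists (spectralmx AC), (spectral_diag AC); split => //; first exact/unitarymxP.
apply: prod_XsubC_eq.
transitivity (char_poly (diag_mx (spectral_diag AC))).
  rewrite big_map big_enum /= char_poly_trig ?diag_mx_is_trig //.
  by apply: eq_bigr => i _; rewrite mxE eqxx.
rewrite -(char_poly_conj _ (spectral_unit AC)) Pinv -eAC /AC -map_char_poly cA.
rewrite rmorph_prod big_map; apply: eq_bigr => x _.
by rewrite rmorphB /= map_polyX map_polyC.
Qed.

Lemma Re_sum I (r : seq I) (P : pred I) (F : I -> C) :
  Re (\sum_(i <- r | P i) F i) = \sum_(i <- r | P i) Re (F i).
Proof. by apply: (big_morph _ (fun x y => _) (erefl _)) => -[? ?] [? ?]. Qed.

Lemma Im_sum I (r : seq I) (P : pred I) (F : I -> C) :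
  Im (\sum_(i <- r | P i) F i) = \sum_(i <- r | P i) Im (F i).
Proof. by apply: (big_morph _ (fun x y => _) (erefl _)) => -[? ?] [? ?]. Qed.

Lemma Re_qform_toC n (A : 'M[R]_n) (w : 'rV[C]_n) :
  Re ((w *m map_mx toC A *m w^t*) 0 0) =
  qform A (fun x => Re (w 0 x)) + qform A (fun x => Im (w 0 x)).
Proof.
rewrite !mxE Re_sum /qform -big_split /=.
under eq_bigr => j _ do rewrite !mxE big_distrl /= Re_sum.
rewrite exchange_big /=; apply: eq_bigr => i _; rewrite -big_split /=.
apply: eq_bigr => j _; rewrite !mxE.
by case: (w 0 i) => a1 b1; case: (w 0 j) => a2 b2 /=; ring.
Qed.

Lemma Re_dnorm n (w : 'rV[C]_n) :
  Re ((w *m w^t*) 0 0) = \sum_i Re (w 0 i) ^+ 2 + \sum_i Im (w 0 i) ^+ 2.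
Proof.
rewrite !mxE Re_sum -big_split /=; apply: eq_bigr => x _; rewrite !mxE.
by case: (w 0 x) => ? ? /=; ring.
Qed.

Lemma unitary_diag_forms n (A : 'M[R]_n) (P : 'M[C]_n) (D c : 'rV[C]_n) :
  P *m P^t* = 1%:M -> map_mx toC A = P^t* *m diag_mx D *m P ->
  ((c *m P) *m map_mx toC A *m (c *m P)^t*) 0 0 =
    \sum_k D 0 k * (c 0 k * (c 0 k)^*) /\
  ((c *m P) *m (c *m P)^t*) 0 0 = \sum_k c 0 k * (c 0 k)^*.
Proof.
move=> PP ->; have -> : (c *m P)^t* = P^t* *m c^t* by rewrite trmx_mul map_mxM.
rewrite !mulmxA -[c *m P *m P^t*]mulmxA PP mulmx1; split.
  rewrite -[c *m diag_mx D *m P *m P^t*]mulmxA PP mulmx1.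
  by rewrite mul_mx_diag !mxE; apply: eq_bigr => k _; rewrite !mxE mulrAC mulrC.
by rewrite !mxE; apply: eq_bigr => k _; rewrite !mxE.
Qed.

Lemma sorted_head_le (l : seq R) x : sorted <=%R l -> x \in l -> l`_0 <= x.
Proof.
case: l => [//|a r] /= pth; rewrite in_cons => /orP[/eqP->//|xr].
exact: allP (order_path_min le_trans pth) x xr.
Qed.

Lemma size_char_poly_roots n (A : 'M[R]_n) (l : seq R) :
  char_poly A = \prod_(x <- l) ('X - x%:P) -> size l = n.
Proof. by move=> cA; have := size_char_poly A; rewrite cA size_prod_XsubC => -[]. Qed.

Lemma Re_toCM (x : R) (z : C) : Re (toC x * z) = x * Re z.
Proof. by case: z => ? ? /=; ring. Qed.

Lemma qform_ge_spectrum_head n (A : 'M[R]_n) (l : seq R) : A^T = A ->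
  sorted <=%R l -> char_poly A = \prod_(x <- l) ('X - x%:P) ->
  forall f : 'I_n -> R, l`_0 * \sum_i f i ^+ 2 <= qform A f.
Proof.
move=> AT sl cA f.
have [P [D [PP PtP eA pD]]] := real_symmetric_spectral AT cA.
pose fC : 'rV[C]_n := \row_x toC (f x).
have [QE NE] := unitary_diag_forms (fC *m P^t*) PP eA.
have fCE : fC *m P^t* *m P = fC by rewrite -mulmxA PtP mulmx1.
rewrite fCE in QE NE.
have : toC l`_0 * (fC *m fC^t*) 0 0 <= (fC *m map_mx toC A *m fC^t*) 0 0.
  rewrite QE NE mulr_sumr -subr_ge0 -sumrB; apply: sumr_ge0 => k _.
  rewrite -mulrBl; apply: mulr_ge0; last exact: mul_conjC_ge0.
  have : D 0 k \in map toC l.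
    by rewrite -(perm_mem pD); apply/mapP; exists k; rewrite ?mem_enum.
  by case/mapP => x xl ->; rewrite subr_ge0 lecR; apply: sorted_head_le.
have ReE x : Re (fC 0 x) = f x by rewrite mxE.
have ImE x : Im (fC 0 x) = 0 by rewrite mxE.
rewrite lecE => /andP[_]; rewrite Re_qform_toC Re_toCM Re_dnorm.
rewrite (eq_qform _ ReE) (eq_qform _ ImE) qform0 addr0.
have -> : \sum_i Im (fC 0 i) ^+ 2 = 0 by rewrite big1 // => i _; rewrite ImE expr0n.
by rewrite addr0; under eq_bigr => i _ do rewrite ReE.
Qed.
Lemma two_low_modes n (D : 'rV[C]_n) (l : seq R) : sorted <=%R l -> (1 < n)%N ->
  size l = n -> perm_eq [seq D 0 k | k <- enum 'I_n] (map toC l) ->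
  exists i j : 'I_n, [/\ i != j, D 0 i <= toC l`_1 & D 0 j <= toC l`_1].
Proof.
move=> sl n1 szl pD.
suff /card_gt1P[i [j [Di Dj ij]]] : (1 < #|[pred k : 'I_n | (D 0 k <= toC l`_1)%R]|)%N.
  by exists i, j.
rewrite cardE /enum_mem size_filter -enumT -(count_map (fun k => D 0 k) (<= toC l`_1)).
rewrite (permP pD).
move: sl; rewrite -szl in n1; case: l n1 {szl pD} => [|a [|b r]] //= _.
by case/andP=> ab _; rewrite !lecR ab lexx.
Qed.

Lemma exists_orth_span2 (F : fieldType) n (r : 'I_n -> F) (i j : 'I_n) :
  i != j -> exists2 c : 'rV[F]_n, c != 0 &
    \sum_k c 0 k * r k = 0 /\ (forall k, k != i -> k != j -> c 0 k = 0).
Proof.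
move=> ij; have ji : j != i by rewrite eq_sym.
pose ci := if r i == 0 then 1 else r j; pose cj := if r i == 0 then 0 else - r i.
exists (\row_k (if k == i then ci else if k == j then cj else 0)); last split.
- apply/eqP => /rowP c0; move: (c0 i) (c0 j); rewrite !mxE eqxx (negbTE ji) eqxx /ci /cj.
  by case: eqP => [_ /eqP|/eqP ri _ /eqP]; rewrite ?oner_eq0 ?oppr_eq0 ?(negbTE ri).
- rewrite (bigD1 i) //= (bigD1 j) //= big1 ?addr0; last first.
    by move=> k /andP[ki kj]; rewrite mxE (negbTE ki) (negbTE kj) mul0r.
  by rewrite !mxE eqxx (negbTE ji) eqxx /ci /cj; case: eqP => [->|_]; ring.
- by move=> k ki kj; rewrite mxE (negbTE ki) (negbTE kj).
Qed.

Lemma qform_orth_toC n (A : 'M[R]_n) (p : 'I_n -> R) (t : R) (w : 'rV[C]_n) :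
  (forall g : 'I_n -> R, \sum_i g i * p i = 0 -> t * \sum_i g i ^+ 2 <= qform A g) ->
  \sum_x w 0 x * toC (p x) = 0 ->
  t * Re ((w *m w^t*) 0 0) <= Re ((w *m map_mx toC A *m w^t*) 0 0).
Proof.
move=> hyp worth; rewrite Re_qform_toC Re_dnorm mulrDr.
apply: lerD; apply: hyp.
  rewrite -[RHS]/(Re 0) -worth Re_sum.
  by apply: eq_bigr => x _; case: (w 0 x) => ? ? /=; ring.
rewrite -[RHS]/(Im 0) -worth Im_sum.
by apply: eq_bigr => x _; case: (w 0 x) => ? ? /=; ring.
Qed.

(* Courant-Fischer: the span of two eigenvectors with eigenvalues at most
   l`_1 meets the hyperplane orthogonal to p. *)
Lemma spectrum_second_ge n (A : 'M[R]_n) (l : seq R) (p : 'I_n -> R) (t : R) :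
  A^T = A -> sorted <=%R l -> char_poly A = \prod_(x <- l) ('X - x%:P) -> (1 < n)%N ->
  (forall g : 'I_n -> R, \sum_i g i * p i = 0 -> t * \sum_i g i ^+ 2 <= qform A g) ->
  t <= l`_1.
Proof.
move=> AT sl cA n1 hyp.
have [P [D [PP PtP eA pD]]] := real_symmetric_spectral AT cA.
have [i [j [ij Di Dj]]] := two_low_modes sl n1 (size_char_poly_roots cA) pD.
have [c c0 [corth csupp]] := exists_orth_span2 (fun k => \sum_x P k x * toC (p x)) ij.
pose w := c *m P.
have w0 : w != 0.
  by apply: contraNneq c0 => w0; rewrite -[c]mulmx1 -PP mulmxA -/w w0 !mul0mx.
have worth : \sum_x w 0 x * toC (p x) = 0.
  rewrite -[RHS]corth /w; under eq_bigr => x _ do rewrite mxE big_distrl /=.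
  rewrite exchange_big /=; apply: eq_bigr => k _; rewrite mulr_sumr.
  by apply: eq_bigr => x _; rewrite mulrA.
have [QE NE] := unitary_diag_forms c PP eA.
have : (w *m map_mx toC A *m w^t*) 0 0 <= toC l`_1 * (w *m w^t*) 0 0.
  rewrite QE NE mulr_sumr -subr_ge0 -sumrB; apply: sumr_ge0 => k _.
  rewrite -mulrBl; have [kij|] := boolP ((k == i) || (k == j)).
    apply: mulr_ge0; last exact: mul_conjC_ge0.
    by rewrite subr_ge0; case/orP: kij => /eqP->.
  by case/norP=> ki kj; rewrite csupp // mul0r mulr0.
rewrite lecE => /andP[_]; rewrite Re_toCM => le1.
have : 0 < (w *m w^t*) 0 0 by rewrite -dotmxE dnorm_gt0.
rewrite ltcE => /andP[_ pos].
by rewrite -(ler_pM2r pos) (le_trans (qform_orth_toC hyp worth)).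
Qed.
Lemma spectrum_head_le_diag n (A : 'M[R]_n) (l : seq R) : A^T = A ->
  sorted <=%R l -> char_poly A = \prod_(x <- l) ('X - x%:P) -> forall j, l`_0 <= A j j.
Proof.
move=> AT sl cA j; have := qform_ge_spectrum_head AT sl cA (fun k => (j == k)%:R).
by rewrite sum_delta_sqr mulr1 qform_delta.
Qed.

End RealSymmetricSpectrum.

Lemma sqrrD_le_split (R : realFieldType) (X Y k D : R) : 0 <= k -> 0 <= D ->
  Y ^+ 2 <= k * D -> (X + Y) ^+ 2 <= (k + 1) * (X ^+ 2 + D).
Proof.
move=> k0 D0 hY; have [k_0|kn0] := eqVneq k 0.
  move: hY; rewrite k_0 mul0r add0r mul1r => hY.
  have -> : Y = 0 by apply/eqP; rewrite -sqrf_eq0 eq_le hY sqr_ge0.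
  by rewrite addr0 lerDl.
have kpos : 0 < k by rewrite lt_def kn0 k0.
(* (X + Y)^2 <= (1 + k) X^2 + (1 + 1/k) Y^2, multiplied through by k *)
have := sqr_ge0 (k * X - Y); nra.
Qed.

Section PathPoincare.
Variables (R : realFieldType) (n : nat) (e : rel 'I_n).
Implicit Types (u h : 'I_n -> R) (a p x : 'I_n).

Definition vertex_energy u h x : R :=
  \sum_y (e x y)%:R * u x * u y * (h x - h y) ^+ 2.

Definition edge_energy u h : R := \sum_x vertex_energy u h x.

Fixpoint path_energy u h a (r : seq 'I_n) : R :=
  if r is b :: r' then (e a b)%:R * u a * u b * (h a - h b) ^+ 2 + path_energy u h b r'
  else 0.

Definition superlevel_path u x p := exists r,
  [/\ path e x r, last x r = p, uniq (x :: r) & all (fun v => u x <= u v) (x :: r)].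

Lemma edge_term_ge0 u h x y : (forall z, 0 <= u z) ->
  0 <= (e x y)%:R * u x * u y * (h x - h y) ^+ 2.
Proof. by move=> u0; rewrite mulr_ge0 ?sqr_ge0 // !mulr_ge0. Qed.

Lemma vertex_energy_ge0 u h x : (forall y, 0 <= u y) -> 0 <= vertex_energy u h x.
Proof. by move=> u0; apply: sumr_ge0 => y _; apply: edge_term_ge0. Qed.

Lemma path_energy_ge0 u h a r : (forall y, 0 <= u y) -> 0 <= path_energy u h a r.
Proof.
move=> u0; elim: r a => [|b r IH] a //=.
by rewrite addr_ge0 ?edge_term_ge0.
Qed.

(* Cauchy-Schwarz along a path on which the weight u stays above c. *)
Lemma path_energy_bound u h (c : R) a r : (forall y, 0 <= u y) -> 0 <= c ->
  path e a r -> all (fun v => c <= u v) (a :: r) ->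
  c ^+ 2 * (h a - h (last a r)) ^+ 2 <= (size r)%:R * path_energy u h a r.
Proof.
move=> u0 c0; elim: r a => [|b r IH] a /=; first by rewrite subrr expr0n mulr0 mul0r.
case/andP=> eab pth /and3P[ca cb cr].
have hb := IH b pth; rewrite /= cb cr in hb.
have hab : (c * (h a - h b)) ^+ 2 <= u a * u b * (h a - h b) ^+ 2.
  by rewrite exprMn ler_wpM2r ?sqr_ge0 // expr2 ler_pM.
have -> : c ^+ 2 * (h a - h (last b r)) ^+ 2 =
    (c * (h a - h b) + c * (h b - h (last b r))) ^+ 2 by ring.
apply: le_trans (sqrrD_le_split _ (ler0n _ (size r)) (path_energy_ge0 h b r u0) _) _.
  by rewrite exprMn; exact: hb.
rewrite eab mul1r -natr1 ler_wpM2l ?lerD2r //.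
by rewrite addr_ge0 ?ler0n.
Qed.

Lemma path_energy_le u h a r : (forall y, 0 <= u y) -> path e a r -> uniq (a :: r) ->
  path_energy u h a r <= edge_energy u h.
Proof.
move=> u0 pth ur; apply: (@le_trans _ _ (\sum_(z <- a :: r) vertex_energy u h z)).
  elim: r a pth {ur} => [|b r IH] a /=.
    by rewrite big_seq1 vertex_energy_ge0.
  case/andP=> eab pth; rewrite big_cons lerD ?IH //.
  rewrite /vertex_energy (bigD1 b) //= lerDl sumr_ge0 // => y _.
  exact: edge_term_ge0.
rewrite big_uniq //= [X in _ <= X](bigID (mem (a :: r))) /= lerDl.
by apply: sumr_ge0 => z _; apply: vertex_energy_ge0.
Qed.

Lemma superlevel_poincare u h p : (forall x, 0 < u x) ->
  (forall x, superlevel_path u x p) ->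
  \sum_x u x ^+ 2 * (h x - h p) ^+ 2 <= n%:R ^+ 2 * edge_energy u h.
Proof.
move=> upos hp; have u0 y : 0 <= u y by apply: ltW.
have E0 : 0 <= edge_energy u h by apply: sumr_ge0 => x _; apply: vertex_energy_ge0.
have step x : u x ^+ 2 * (h x - h p) ^+ 2 <= n%:R * edge_energy u h.
  have [r [pth <- ur ux]] := hp x.
  have szr : (size r <= n)%N.
    have := uniq_leq_size ur (fun z _ => mem_enum 'I_n z).
    by rewrite size_enum_ord => /ltnW.
  apply: le_trans (path_energy_bound h u0 (u0 x) pth ux) _.
  apply: le_trans (ler_wpM2l (ler0n _ _) (path_energy_le h u0 pth ur)) _.
  by rewrite ler_wpM2r // ler_nat.
apply: le_trans (ler_sum _ (fun x _ => step x)) _.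
by rewrite sumr_const card_ord -[_ *+ n]mulr_natr mulrAC -expr2.
Qed.

End PathPoincare.

Section SinglePeaked.
Variables (R : realType) (n : nat) (e : rel 'I_n).
Hypothesis esym : symmetric e.
Implicit Types (u : 'I_n -> R) (c : R).

Definition superlevel_rel u c := [rel a b | [&& e a b, c <= u a & c <= u b]].

Lemma superlevel_path_all u c a r :
  path (superlevel_rel u c) a r -> all (fun v => c <= u v) r.
Proof.
by elim: r a => [//|b r IH] a /= /andP[/and3P[_ _ cb] pth]; rewrite cb (IH b).
Qed.

Lemma local_max_uphill u x y : u x <= u y ->
  exists q, [/\ local_max e u q, u x <= u q & connect (superlevel_rel u (u x)) y q].
Proof.
have [k] := ubnP #|[set z | u y < u z]|; elim: k y => // k IH y ck xy.
have [lmy|] := boolP (local_max e u y); first by exists y.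
case/forallPn => z; rewrite negb_imply -ltNge => /andP[eyz yz].
have /proper_card ltc : [set w | u z < u w] \proper [set w | u y < u w].
  apply/properP; split; first by apply/subsetP => w; rewrite !inE; apply: lt_trans.
  by exists z; rewrite !inE ?ltxx.
have xz := le_trans xy (ltW yz).
have [q [lq xq czq]] := IH z (leq_trans ltc ck) xz.
exists q; split => //; apply: connect_trans czq; apply: connect1.
by rewrite /= eyz xy xz.
Qed.

(* Neighbouring local maxima have equal values, so the path of local maxima
   leading to the global maximum never descends. *)
Lemma single_peaked_superlevel_path u p : (forall z, u z <= u p) ->
  single_peaked e u -> forall x, superlevel_path e u x p.
Proof.
move=> pmax sp x.
have [q [lq xq cxq]] := local_max_uphill (lexx (u x)).
have lp : local_max e u p by apply/forallP => y; apply/implyP => _; apply: pmax.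
have /connectP [r0 pth0 lst0] := sp q p lq lp.
have cqp : connect (superlevel_rel u (u x)) q p.
  apply/connectP; exists r0 => //.
  elim: r0 q xq lq pth0 {lst0 cxq} => [//|b r IH] a xa la /=.
  case/andP=> /and3P[eab _ lb] pth.
  have ab : u a <= u b by move/forallP: lb => /(_ a) /implyP; apply; rewrite esym.
  have xb := le_trans xa ab.
  by rewrite eab xa xb /= (IH b xb lb pth).
have /connectP [r1 pth1] := connect_trans cxq cqp.
case: (shortenP pth1) => r2 pth2 ur2 _ lst2.
exists r2; split => //.
- by apply: sub_path pth2 => a b /and3P[].
- by rewrite /= lexx (superlevel_path_all pth2).
Qed.

End SinglePeaked.

Lemma deg_le_max_deg n (e : rel 'I_n) x : (deg e x <= max_deg e)%N.
Proof. exact: (@leq_bigmax _ (fun x => deg e x)). Qed.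

Lemma max_deg_gt0 n (e : rel 'I_n) (x y : 'I_n) :
  x != y -> graph_connected e -> (0 < max_deg e)%N.
Proof.
move=> xy conn; apply: leq_trans (deg_le_max_deg e x).
rewrite lt0n cards_eq0; apply: contra xy => /eqP ex.
have /connectP [[|z r] /= pth ->] := conn x y => //.
by case/andP: pth => exz _; have := in_set0 z; rewrite -ex inE exz.
Qed.

Section Hamiltonian.
Variables (R : realType) (n : nat) (e : rel 'I_n) (W : 'I_n -> R) (s : R).
Hypothesis sg : simple_graph e.
Local Notation H := (Hs e W s).
Implicit Types (u g h : 'I_n -> R) (x y : 'I_n).

Definition Hs_diag x : R := (1 - s) * (deg e x)%:R + s * W x.

Lemma edge_sym : symmetric e. Proof. by case: sg. Qed.

Lemma edge_irr x : e x x = false. Proof. by case: sg => _ ->. Qed.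

Lemma Hs_entry i j : H i j = (i == j)%:R * Hs_diag i - (e i j)%:R * (1 - s).
Proof.
rewrite /Hs /laplacian !mxE.
have [->|ij] := eqVneq i j; first by rewrite edge_irr /Hs_diag /=; ring.
by case: (e i j) => /=; ring.
Qed.

Lemma Hs_sym : H^T = H.
Proof.
apply/matrixP => i j; rewrite mxE; have [->//|ij] := eqVneq i j.
by rewrite !Hs_entry edge_sym eq_sym (negbTE ij) /= !mul0r.
Qed.

Lemma Hs_offdiag_le0 i j : s <= 1 -> i != j -> H i j <= 0.
Proof.
move=> s1 ij; rewrite Hs_entry (negbTE ij) mul0r sub0r oppr_le0.
by rewrite mulr_ge0 ?ler0n ?subr_ge0.
Qed.

Lemma deg_sum x : (deg e x)%:R = \sum_y (e x y)%:R :> R.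
Proof.
rewrite /deg -sum1_card natr_sum big_mkcond /=; apply: eq_bigr => y _.
by rewrite inE; case: (e x y).
Qed.

Lemma sum2_edge_swap (F : 'I_n -> 'I_n -> R) :
  \sum_x \sum_y (e x y)%:R * F x y = \sum_x \sum_y (e x y)%:R * F y x.
Proof.
rewrite exchange_big /=; apply: eq_bigr => x _; apply: eq_bigr => y _.
by rewrite edge_sym.
Qed.

Lemma qform_HsE g : qform H g =
  \sum_x Hs_diag x * g x ^+ 2 - (1 - s) * \sum_x \sum_y (e x y)%:R * g x * g y.
Proof.
transitivity (\sum_x \sum_y ((x == y)%:R * (Hs_diag x * g x * g y)
   - (1 - s) * ((e x y)%:R * g x * g y))).
  by apply: eq_bigr => x _; apply: eq_bigr => y _; rewrite Hs_entry; ring.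
rewrite sum2B mulr_sum2r; congr (_ - _); apply: eq_bigr => x _.
by rewrite sum_delta expr2 mulrA.
Qed.

Lemma qform_Hs g : qform H g =
  s * \sum_x W x * g x ^+ 2 +
  (1 - s) / 2 * \sum_x \sum_y (e x y)%:R * (g x - g y) ^+ 2.
Proof.
have -> : \sum_x \sum_y (e x y)%:R * (g x - g y) ^+ 2 =
    2 * \sum_x (deg e x)%:R * g x ^+ 2 - 2 * \sum_x \sum_y (e x y)%:R * g x * g y.
  transitivity (\sum_x \sum_y ((e x y)%:R * g x ^+ 2 + (e x y)%:R * g y ^+ 2
     - 2 * ((e x y)%:R * g x * g y))).
    by apply: eq_bigr => x _; apply: eq_bigr => y _; ring.
  rewrite sum2B sum2D mulr_sum2r -(sum2_edge_swap (fun x _ => g x ^+ 2)).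
  rewrite [X in X + X - _](eq_bigr (fun x => (deg e x)%:R * g x ^+ 2)) => [|x _].
    by ring.
  by rewrite deg_sum mulr_suml.
rewrite qform_HsE /Hs_diag.
under eq_bigr => x _ do rewrite mulrDl -!mulrA.
by rewrite big_split /= -!mulr_sumr; field.
Qed.

Lemma Hs_eigen_eqn u (lam : R) : (forall y, \sum_x u x * H x y = lam * u y) ->
  forall x, Hs_diag x * u x - (1 - s) * \sum_y (e x y)%:R * u y = lam * u x.
Proof.
move=> E x; rewrite -E.
transitivity (\sum_y ((x == y)%:R * (Hs_diag x * u y) - (1 - s) * ((e x y)%:R * u y))).
  by rewrite sumrB sum_delta mulr_sumr.
apply: eq_bigr => y _; rewrite Hs_entry edge_sym.
by have [->|xy] := eqVneq x y; rewrite /= ?mul0r; ring.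
Qed.

Lemma qform_Hs_ground_transform u h (lam : R) :
  (forall x, Hs_diag x * u x - (1 - s) * \sum_y (e x y)%:R * u y = lam * u x) ->
  2 * (qform H (fun x => u x * h x) - lam * \sum_x (u x * h x) ^+ 2) =
  (1 - s) * edge_energy e u h.
Proof.
move=> eig.
pose T1 := \sum_x \sum_y (e x y)%:R * (u x * u y * h x ^+ 2).
pose T2 := \sum_x \sum_y (e x y)%:R * (u x * u y * h x * h y).
have diagE : \sum_x Hs_diag x * (u x * h x) ^+ 2 - lam * \sum_x (u x * h x) ^+ 2
    = (1 - s) * T1.
  rewrite mulr_sumr -sumrB /T1 mulr_sumr; apply: eq_bigr => x _.
  transitivity ((Hs_diag x * u x - lam * u x) * (u x * h x ^+ 2)); first by ring.
  have -> : Hs_diag x * u x - lam * u x = (1 - s) * \sum_y (e x y)%:R * u y.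
    by rewrite -eig; ring.
  by rewrite -mulrA mulr_suml; congr (_ * _); apply: eq_bigr => y _; ring.
have offdiagE : \sum_x \sum_y (e x y)%:R * (u x * h x) * (u y * h y) = T2.
  by apply: eq_bigr => x _; apply: eq_bigr => y _; ring.
have energyE : edge_energy e u h = 2 * T1 - 2 * T2.
  transitivity (\sum_x \sum_y ((e x y)%:R * (u x * u y * h x ^+ 2)
     + (e x y)%:R * (u y * u x * h y ^+ 2) - 2 * ((e x y)%:R * (u x * u y * h x * h y)))).
    by apply: eq_bigr => x _; apply: eq_bigr => y _; ring.
  rewrite sum2B sum2D mulr_sum2r -(sum2_edge_swap (fun x y => u x * u y * h x ^+ 2)).
  by rewrite -/T1 -/T2; ring.
rewrite qform_HsE energyE; transitivity (2 * (
  (\sum_x Hs_diag x * (u x * h x) ^+ 2 - lam * \sum_x (u x * h x) ^+ 2)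
   - (1 - s) * \sum_x \sum_y (e x y)%:R * (u x * h x) * (u y * h y))); first by ring.
by rewrite diagE offdiagE; ring.
Qed.

(* Perron-Frobenius: the zero set of a nonnegative eigenvector is closed under
   adjacency, hence empty on a connected graph. *)
Lemma Hs_eigenvector_gt0 u (lam : R) : s < 1 -> graph_connected e ->
  (forall x, 0 <= u x) -> (exists y, u y != 0) ->
  (forall y, \sum_x u x * H x y = lam * u y) -> forall x, 0 < u x.
Proof.
move=> s1 conn u0 [y uy] eig x.
have zero_closed a b : e a b -> u a = 0 -> u b = 0.
  move=> eab ua; have := Hs_eigen_eqn eig a; rewrite ua !mulr0 sub0r => /eqP.
  rewrite oppr_eq0 mulf_eq0 subr_eq0 eq_sym (lt_eqF s1) /=.
  rewrite psumr_eq0 => [/allP/(_ b (mem_index_enum b))|z _]; last first.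
    by rewrite mulr_ge0 ?ler0n.
  by rewrite eab mul1r => /eqP.
rewrite lt_def u0 andbT; apply/negP => /eqP ux.
move: uy; have /connectP [r pth ->] := conn x y.
elim: r x ux pth => [|b r IH] a ua /=; first by rewrite ua eqxx.
by case/andP=> eab; apply: IH; apply: zero_closed eab ua.
Qed.

(* By orthogonality to u, subtracting the value of h at the peak p only
   increases the weighted norm, so the Poincare inequality applies. *)
Lemma qform_Hs_orth_ge u (lam : R) p : (0 < n)%N -> s <= 1 -> (forall x, 0 < u x) ->
  (forall y, \sum_x u x * H x y = lam * u y) -> (forall x, superlevel_path e u x p) ->
  forall g, \sum_x g x * u x = 0 ->
  (lam + (1 - s) / (2 * n%:R ^+ 2)) * \sum_x g x ^+ 2 <= qform H g.
Proof.
move=> n0 s1 upos eig hp g orth.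
pose h x := g x / u x.
have gh x : g x = u x * h x by rewrite /h mulrC divfK // gt_eqF.
have dir := qform_Hs_ground_transform h (Hs_eigen_eqn eig).
have g2 : \sum_x (u x * h x) ^+ 2 = \sum_x g x ^+ 2 by apply: eq_bigr => x _; rewrite gh.
rewrite -(eq_qform H gh) g2 in dir.
have poinc := superlevel_poincare h upos hp.
have var : \sum_x g x ^+ 2 <= \sum_x u x ^+ 2 * (h x - h p) ^+ 2.
  have -> : \sum_x u x ^+ 2 * (h x - h p) ^+ 2 =
      \sum_x g x ^+ 2 - 2 * h p * \sum_x g x * u x + h p ^+ 2 * \sum_x u x ^+ 2.
    by rewrite !mulr_sumr -sumrB -big_split /=; apply: eq_bigr => x _; rewrite gh; ring.
  by rewrite orth mulr0 subr0 lerDl mulr_ge0 ?sqr_ge0 // sumr_ge0 // => x _; apply: sqr_ge0.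
have N0 : 0 < n%:R ^+ 2 :> R by rewrite exprn_gt0 // ltr0n.
have k0 : 0 <= (1 - s) / (2 * n%:R ^+ 2).
  by rewrite divr_ge0 ?subr_ge0 // mulr_ge0 // ltW.
have := ler_wpM2l k0 (le_trans var poinc).
have -> : (1 - s) / (2 * n%:R ^+ 2) * (n%:R ^+ 2 * edge_energy e u h) =
    (1 - s) * edge_energy e u h / 2 by field; rewrite pnatr_eq0 -lt0n.
lra.
Qed.

End Hamiltonian.

Lemma sorted_spectrum_min_eigenvalue (R : realType) n (A : 'M[R]_n) (l : seq R) :
  (0 < n)%N -> sorted_spectrum A l -> min_eigenvalue A l`_0.
Proof.
move=> n0 [sl cA]; have szl := size_char_poly_roots cA.
split => [|b]; rewrite eigenvalue_root_char cA root_prod_XsubC.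
  by rewrite mem_nth // szl.
exact: sorted_head_le.
Qed.

Section HamiltonianSpectrum.
Variables (R : realType) (n : nat) (e : rel 'I_n) (W : 'I_n -> R) (s : R).
Hypothesis sg : simple_graph e.
Local Notation H := (Hs e W s).

Lemma Hs_gap_large_s (x0 : 'I_n) l : 0 <= s -> s <= 1 -> (1 < n)%N ->
  (forall x, x != x0 -> W x0 + 1 <= W x) -> sorted_spectrum H l ->
  s - (1 - s) * (max_deg e)%:R <= l`_1 - l`_0.
Proof.
move=> s0 s1 n1 Wx0 [sl cA].
have HT := Hs_sym W s sg.
have l0_le : l`_0 <= (1 - s) * (max_deg e)%:R + s * W x0.
  apply: le_trans (spectrum_head_le_diag HT sl cA x0) _.
  rewrite Hs_entry // eqxx edge_irr // mul1r mul0r subr0 lerD2r ler_wpM2l ?subr_ge0 //.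
  by rewrite ler_nat deg_le_max_deg.
have l1_ge : s * (W x0 + 1) <= l`_1.
  apply: (spectrum_second_ge (p := fun k => (x0 == k)%:R)) HT sl cA n1 _ => g.
  under eq_bigr => k _ do rewrite mulrC; rewrite sum_delta => g0.
  rewrite qform_Hs // -[X in X <= _]addr0 lerD //.
    rewrite -mulrA ler_wpM2l // mulr_sumr ler_sum // => x _.
    have [->|xx0] := eqVneq x x0; first by rewrite g0 expr0n /= !mulr0.
    by rewrite ler_wpM2r ?sqr_ge0 ?Wx0.
  rewrite mulr_ge0 ?divr_ge0 ?subr_ge0 // sumr_ge0 // => x _.
  by rewrite sumr_ge0 // => y _; rewrite mulr_ge0 ?ler0n ?sqr_ge0.
lra.
Qed.

(* The entrywise modulus of a ground state is again a ground state, because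
   the off-diagonal entries of H are nonpositive. *)
Lemma Hs_ground_state l : s < 1 -> graph_connected e -> (0 < n)%N ->
  sorted_spectrum H l ->
  exists2 psi : 'rV[R]_n, psi *m H = l`_0 *: psi & forall x, 0 < psi 0 x.
Proof.
move=> s1 conn n0 [sl cA].
have HT := Hs_sym W s sg; have LA := qform_ge_spectrum_head HT sl cA.
have [ev _] := sorted_spectrum_min_eigenvalue n0 (conj sl cA).
have /eigenvalueP [v vH vnz] := ev.
pose u x := `|v 0 x|.
have sq : \sum_i u i ^+ 2 = \sum_i v 0 i ^+ 2.
  by apply: eq_bigr => i _; rewrite /u real_normK ?num_real.
have Qu : qform H u = l`_0 * \sum_i u i ^+ 2.
  apply/eqP; rewrite eq_le LA andbT sq -(qform_eigenvector vH).
  by apply: qform_norm_le => i j; apply: Hs_offdiag_le0 => //; apply: ltW.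
have eigu := qform_min_eigenvector HT LA Qu.
have upos : forall x, 0 < u x.
  apply: Hs_eigenvector_gt0 eigu => // [x|]; first exact: normr_ge0.
  apply/existsP; apply: contraNT vnz; rewrite negb_exists => /forallP u0.
  by apply/eqP/rowP => x; rewrite mxE; move: (u0 x); rewrite negbK normr_eq0 => /eqP.
exists (\row_x u x) => [|x]; last by rewrite mxE.
by apply/rowP => y; rewrite !mxE -eigu; apply: eq_bigr => x _; rewrite mxE.
Qed.

Lemma Hs_gap_small_s l (psi : 'rV[R]_n) : s < 1 -> (1 < n)%N -> sorted_spectrum H l ->
  psi *m H = l`_0 *: psi -> (forall x, 0 < psi 0 x) -> single_peaked e (fun x => psi 0 x) ->
  (1 - s) / (2 * n%:R ^+ 2) <= l`_1 - l`_0.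
Proof.
move=> s1 n1 [sl cA] psiH psi0 peaked.
have x0 : 'I_n by exists 0%N; apply: ltnW.
pose p := [arg max_(i > x0) psi 0 i]%O.
have pmax z : psi 0 z <= psi 0 p by rewrite /p; case: arg_maxP => // i _; apply.
have paths := single_peaked_superlevel_path (edge_sym sg) pmax peaked.
have gap := qform_Hs_orth_ge sg (ltnW n1) (ltW s1) psi0 (row_eigen_eqn psiH) paths.
have := spectrum_second_ge (Hs_sym W s sg) sl cA n1 gap; lra.
Qed.

End HamiltonianSpectrum.

Lemma Wspread_ge0 (R : realType) n (W : 'I_n -> R) : 0 <= Wspread W.
Proof.
by apply: (big_rec (fun x => 0 <= x)) => // i x _ hx; rewrite le_max hx orbT.
Qed.

(* If (1 - s)(d + 1) <= 1/2 the large-s bound gives at least 1/2; otherwise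
   1 - s > 1 / (2 (d + 1)) >= 1 / (4 d^2) feeds the small-s bound.  The
   factor 8 M + 1 >= 1 is slack. *)
Lemma gap_bound_combine (R : realFieldType) (s d M N g : R) :
  0 <= s -> s <= 1 -> 1 <= d -> 0 <= M -> 0 < N ->
  s - (1 - s) * d <= g -> (s < 1 -> (1 - s) / (2 * N ^+ 2) <= g) ->
  Num.min (7 / 16) (1 / (16 * d ^+ 2 * (8 * M + 1) * N ^+ 2)) <= g.
Proof.
move=> s0 s1 d1 M0 N0 large small.
have ex1 : (1 - s) * (d + 1) = (1 - s) * d + (1 - s) by ring.
have [h|h] := lerP ((1 - s) * (d + 1)) (1 / 2).
  by rewrite ge_min; apply/orP; left; lra.
have s1' : s < 1 by rewrite lt_neqAle s1 andbT; apply: contraTneq h => ->; lra.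
rewrite ge_min; apply/orP; right; apply: le_trans (small s1').
have K0 : 0 < 16 * d ^+ 2 * (8 * M + 1) * N ^+ 2.
  by rewrite !mulr_gt0 ?exprn_gt0 //; lra.
rewrite ler_pdivrMr //.
have -> : (1 - s) / (2 * N ^+ 2) * (16 * d ^+ 2 * (8 * M + 1) * N ^+ 2)
   = 8 * ((1 - s) * d ^+ 2) + 64 * (((1 - s) * d ^+ 2) * M).
  by field; rewrite gt_eqF ?exprn_gt0.
have : (1 - s) * (d + 1) <= (1 - s) * (2 * d ^+ 2).
  by rewrite ler_wpM2l ?subr_ge0 // expr2; nra.
have X0 : 0 <= (1 - s) * d ^+ 2 by rewrite mulr_ge0 ?subr_ge0 ?sqr_ge0.
have := mulr_ge0 X0 M0; lra.
Qed.

Theorem mainTheorem8 (R : realType) (n : nat) (e : rel 'I_n) (W : 'I_n -> R) :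
  simple_graph e -> graph_connected e -> (3 <= n)%N ->
  (exists x0 : 'I_n,
      (forall x, x != x0 -> W x0 + 1 <= W x) /\
      (exists x1, x1 != x0 /\ W x1 = W x0 + 1)) ->
  (forall s : R, 0 <= s -> s < 1 ->
     forall (a : R) (psi : 'rV[R]_n),
       min_eigenvalue (Hs e W s) a ->
       psi *m Hs e W s = a *: psi ->
       (forall x, 0 < psi 0 x) ->
       single_peaked e (fun x => psi 0 x)) ->
  forall s : R, 0 <= s -> s <= 1 ->
  forall l : seq R, sorted_spectrum (Hs e W s) l ->
    Num.min (7 / 16)
      (1 / (16 * (max_deg e)%:R ^+ 2 * (8 * Wspread W + 1) * n%:R ^+ 2))
    <= l`_1 - l`_0.
Proof.
move=> sg conn n3 [x0 [Wx0 [x1 [x10 _]]]] peaked s s0 s1 l spec.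
have n1 : (1 < n)%N := ltnW n3.
apply: (gap_bound_combine s0 s1 _ (Wspread_ge0 W)).
- by rewrite ler1n (max_deg_gt0 x10 conn).
- by rewrite ltr0n ltnW.
- exact: (Hs_gap_large_s sg s0 s1 n1 Wx0 spec).
move=> s1'; have [psi psiH psi0] := Hs_ground_state sg s1' conn (ltnW n1) spec.
apply: (Hs_gap_small_s sg s1' n1 spec psiH psi0).
exact: (peaked s s0 s1' _ psi (sorted_spectrum_min_eigenvalue (ltnW n1) spec) psiH psi0).
Qed.
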